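(* Let $p$ be an odd prime, $q=p^m$, and let $N$ be a positive divisor of $p-1$ with $\gcd(N,\frac{q-1}{p-1})=1$. Let $\theta$ be a primitive $\frac{q-1}{N}$-th root of unity in $\mathbb{F}_q$. Then for any $c\in\mathbb{F}_q^*$, \[\sum_{\lambda\in\mathbb{F}_p^*}\sum_{i=0}^{\frac{q-1}{N}-1}\zeta_p^{\mathrm{Tr}_{q/p}(\lambda c\theta^i)}=-\frac{p-1}{N},\] and for any $a\in\mathbb{F}_q$, \[\sum_{\lambda\in\mathbb{F}_p^*}\sum_{i=0}^{\frac{q-1}{N}-1}\zeta_p^{\mathrm{Tr}_{q/p}(\lambda c\theta^i)}\eta(\lambda a\theta^i)=\frac{p-1}{N}\,\eta(ac)\sum_{x\in\mathbb{F}_q^*}\zeta_p^{\mathrm{Tr}_{q/p}(x)}\eta(x).\]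
   Context: $\zeta_p=e^{2\pi\mathrm{i}/p}$; $\mathrm{Tr}_{q/p}$ is the trace $\mathbb{F}_q\to\mathbb{F}_p$; $\eta$ is the quadratic character of $\mathbb{F}_q$ with $\eta(0)=0$. *)

From HB Require Import structures.
From mathcomp Require Import all_boot all_order all_algebra all_field.
Set Implicit Arguments. Unset Strict Implicit. Unset Printing Implicit Defensive.
Import Order.TTheory GRing.Theory Num.Theory.
Local Open Scope ring_scope.

(* zeta_p = e^{2 pi i / p} in the algebraic complex numbers: p.-root (-1)
   is the p-th root of -1 with minimal nonnegative argument, i.e. e^{i pi/p}. *)
Definition zeta (p : nat) : algC := (p.-root (-1 : algC)) ^+ 2.

Definition trF (F : finFieldType) (p m : nat) (x : F) : F :=
  \sum_(j < m) x ^+ (p ^ j).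

Definition tr_nat (F : finFieldType) (p m : nat) (x : F) : nat :=
  odflt 0%N (omap (@nat_of_ord p) [pick k : 'I_p | (k%:R : F) == trF p m x]).

Definition psi (F : finFieldType) (p m : nat) (x : F) : algC :=
  zeta p ^+ tr_nat p m x.

Definition qchar (F : finFieldType) (x : F) : algC :=
  if x == 0 then 0 else if [exists y : F, y ^+ 2 == x] then 1 else -1.

(* The elements k theta^i (0 < k < p, i < (q-1)/N) are the products x y of a
   (p-1)-th root of unity x -- these are exactly the nonzero elements of F_p --
   and a (q-1)/N-th root of unity y.  The gcd of the two orders is d = (p-1)/N
   and their product is d (q-1), so multiplication maps these pairs onto F_q^*
   exactly d to one: no fibre has more than d points, since the quotient of two
   points of a fibre is a d-th root of unity, and the fibre sizes add up to
   d (q-1).  Both double sums are therefore d times a sum over F_q^*.  The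
   additive character sums to -1 there, because its sum over F_q vanishes: the
   trace is a polynomial of degree p^(m-1) < q, hence not identically zero.
   After the substitution x = c z the twisted sum becomes eta(ac) times the
   Gauss sum, by multiplicativity of eta. *)

From HB Require Import structures.
From mathcomp Require Import all_boot all_order all_algebra all_field.
From mathcomp Require cyclic.
Import Order.TTheory GRing.Theory Num.Theory.
Local Open Scope ring_scope.
Set Implicit Arguments. Unset Strict Implicit.

Lemma expr_gcdn_eq1 (R : nzRingType) (x : R) a b :
  (0 < a)%N -> x ^+ a = 1 -> x ^+ b = 1 -> x ^+ gcdn a b = 1.
Proof.
move=> a_gt0 xa1 xb1; have [k x_prim k_dvd_a] := prim_order_exists a_gt0 xa1.
apply: expr_dvd (prim_expr_order x_prim) _.
by rewrite dvdn_gcd k_dvd_a /= (prim_order_dvd x_prim) xb1.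
Qed.

Lemma unity_root_neq0 (R : nzRingType) n (x : R) : (0 < n)%N -> x ^+ n == 1 -> x != 0.
Proof. by move=> n_gt0; apply: contraTneq => ->; rewrite expr0n gtn_eqF //= eq_sym oner_eq0. Qed.

Lemma natr_eq_modp (R : nzRingType) p u v : p \in [pchar R] ->
  ((u%:R : R) == v%:R) = (u == v %[mod p]).
Proof.
move=> pcharR; wlog le_vu : u v / (v <= u)%N.
  move=> IH; case: (leqP v u) => [/IH // | /ltnW/IH].
  by rewrite eq_sym => ->; rewrite eq_sym.
by rewrite eqn_mod_dvd // (dvdn_pcharf pcharR) natrB // subr_eq0.
Qed.

Section FiniteField.
Variable F : finFieldType.

Lemma card_unity_root_le n : (0 < n)%N -> (#|[pred x : F | x ^+ n == 1%R]| <= n)%N.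
Proof.
move=> n_gt0; rewrite cardE; apply: max_unity_roots (enum_uniq _) => //.
by apply/allP => x; rewrite mem_enum unity_rootE.
Qed.

Lemma sum_units_scale (V : nmodType) (c : F) (h : F -> V) : c != 0 ->
  \sum_(z | z != 0) h (c * z) = \sum_(z | z != 0) h z.
Proof.
move=> c_neq0; rewrite [RHS](reindex_inj (mulfI c_neq0)) /=.
by apply: eq_bigl => z; rewrite mulf_eq0 (negbTE c_neq0).
Qed.

Section UnityRootSeq.
Variables (n : nat) (w : seq F).
Hypotheses (n_gt0 : (0 < n)%N) (w_uniq : uniq w) (size_w : size w = n).
Hypothesis w_roots : all n.-unity_root w.

Lemma unity_root_seqE x : (x ^+ n == 1) = (x \in w).
Proof. by rewrite -unity_rootE; exact: (mem_unity_roots n_gt0 w_roots w_uniq size_w). Qed.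

Lemma sum_unity_root_seq (V : nmodType) (h : F -> V) :
  \sum_(x <- w) h x = \sum_(x | x ^+ n == 1) h x.
Proof. by rewrite big_uniq //; apply: eq_bigl => x; rewrite unity_root_seqE. Qed.

Lemma card_unity_root_seq : #|[pred x : F | x ^+ n == 1]| = n.
Proof.
rewrite -[RHS]size_w -(card_uniqP w_uniq); apply: eq_card => x.
by rewrite inE unity_root_seqE.
Qed.

End UnityRootSeq.

Section PrimRootPowers.
Variables (n : nat) (t : F).
Hypothesis t_prim : n.-primitive_root t.

Let powers := [seq t ^+ i | i <- index_iota 0 n].

Let powers_uniq : uniq powers.
Proof.
rewrite map_inj_in_uniq ?iota_uniq // => i j; rewrite !mem_index_iota => i_lt j_lt.
by move/eqP; rewrite (eq_prim_root_expr t_prim) !modn_small // => /eqP.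
Qed.

Let size_powers : size powers = n.
Proof. by rewrite size_map size_iota subn0. Qed.

Let powers_roots : all n.-unity_root powers.
Proof.
apply/allP => _ /mapP [i _ ->]; rewrite unity_rootE.
by rewrite exprAC (prim_expr_order t_prim) expr1n.
Qed.

Lemma sum_prim_root_powers (V : nmodType) (h : F -> V) :
  \sum_(i < n) h (t ^+ i) = \sum_(x | x ^+ n == 1) h x.
Proof.
rewrite -(sum_unity_root_seq (prim_order_gt0 t_prim) powers_uniq size_powers powers_roots).
by rewrite big_map big_mkord.
Qed.

Lemma card_prim_root_powers : #|[pred x : F | x ^+ n == 1]| = n.
Proof. exact: card_unity_root_seq (prim_order_gt0 t_prim) powers_uniq size_powers powers_roots. Qed.

End PrimRootPowers.

End FiniteField.

Section MulUnityRoots.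
Variables (F : finFieldType) (a b : nat).
Hypothesis card_a : #|[pred x : F | x ^+ a == 1]| = a.
Hypothesis card_b : #|[pred x : F | x ^+ b == 1]| = b.
Hypothesis mul_ab : (a * b = gcdn a b * #|F|.-1)%N.

Let order_gt0 n : #|[pred x : F | x ^+ n == 1]| = n -> (0 < n)%N.
Proof. by move=> <-; apply/card_gt0P; exists 1; rewrite inE expr1n. Qed.

Let a_gt0 := order_gt0 card_a.
Let b_gt0 := order_gt0 card_b.

Let fibre (z : F) := #|[pred x : F | (x ^+ a == 1) && ((x^-1 * z) ^+ b == 1)]|.

Let sum_mul_fibre (V : nmodType) (h : F -> V) :
  \sum_(x | x ^+ a == 1) \sum_(y | y ^+ b == 1) h (x * y)
    = \sum_(z | z != 0) h z *+ fibre z.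
Proof.
have shift x : x ^+ a == 1 ->
    \sum_(y | y ^+ b == 1) h (x * y) = \sum_(z | (x^-1 * z) ^+ b == 1) h z.
  move=> xa1; have x_neq0 := unity_root_neq0 a_gt0 xa1.
  rewrite [RHS](reindex_inj (mulfI x_neq0)) /=.
  by apply: eq_bigl => y; rewrite mulKf.
rewrite (eq_bigr _ shift); under eq_bigr do rewrite big_mkcond.
rewrite exchange_big (bigD1 0) //= big1 ?add0r => [|x _]; last first.
  by rewrite mulr0 expr0n gtn_eqF //= eq_sym oner_eq0.
by apply: eq_bigr => z _; rewrite -big_mkcondr sumr_const.
Qed.

Let fibre_le z : (fibre z <= gcdn a b)%N.
Proof.
rewrite /fibre; set P := [pred x | _].
have [x0 /andP [x0a1 x0b1] | /eq_card0 -> //] := pickP P.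
have x0_neq0 := unity_root_neq0 a_gt0 x0a1.
rewrite -!sum1_card (reindex_inj (mulIf x0_neq0)) /= !sum1_card.
apply: leq_trans (subset_leq_card _) (card_unity_root_le F _); last by rewrite gcdn_gt0 a_gt0.
apply/subsetP => u; rewrite !inE => /andP [ua1 ub1]; apply/eqP/expr_gcdn_eq1 => //.
  by move: ua1; rewrite exprMn (eqP x0a1) mulr1 => /eqP.
move: ub1; rewrite invfM -mulrA exprMn (eqP x0b1) mulr1 exprVn.
by rewrite invr_eq1 => /eqP.
Qed.

Let sum_fibre : (\sum_(z : F | z != 0%R) fibre z = a * b)%N.
Proof.
have := sum_mul_fibre (fun _ => 1%N).
under eq_bigr do rewrite sumr_const.
rewrite sumr_const card_a card_b -mulrnA natn mulnC => ->.
by apply: eq_bigr => z _; rewrite natn.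
Qed.

Let fibre_eq z : z != 0 -> fibre z = gcdn a b.
Proof.
have : (\sum_(z : F | z != 0%R) (gcdn a b - fibre z) = 0)%N.
  rewrite sumnB => [|x _]; last exact: fibre_le.
  by rewrite sum_fibre sum_nat_const cardC1 mul_ab mulnC subnn.
move/eqP; rewrite sum_nat_eq0 => /forallP /(_ z) /implyP sub0 z_neq0.
by apply/eqP; rewrite eqn_leq fibre_le -subn_eq0 sub0.
Qed.

Lemma sum_mul_unity_roots (V : nmodType) (h : F -> V) :
  \sum_(x | x ^+ a == 1) \sum_(y | y ^+ b == 1) h (x * y)
    = (\sum_(z | z != 0) h z) *+ gcdn a b.
Proof. by rewrite sum_mul_fibre -sumrMnl; apply: eq_bigr => z /fibre_eq ->. Qed.

End MulUnityRoots.

Lemma expf_predn_eq1 (R : idomainType) (x : R) n :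
  (0 < n)%N -> x != 0 -> x ^+ n = x -> x ^+ n.-1 = 1.
Proof. by move=> n_gt0 x_neq0 xn; apply: (mulIf x_neq0); rewrite mul1r -exprSr prednK. Qed.

Lemma zeta_neq1 p : (1 < p)%N -> zeta p != 1.
Proof.
move=> p_gt1; rewrite /zeta sqrf_eq1 negb_or; apply/andP; split; apply/eqP => r_eq.
  have := rootCK (ltnW p_gt1) (-1 : algC); rewrite r_eq expr1n => /eqP.
  by rewrite eq_sym lt_eqF // (lt_trans (ltrN10 _) ltr01).
by have := rootC_lt0 (-1 : algC) p_gt1; rewrite r_eq (ltrN10 algC).
Qed.

Lemma zeta_prim p : prime p -> p.-primitive_root (zeta p).
Proof.
move=> p_prime; have p_gt0 := prime_gt0 p_prime.
have zeta_p : zeta p ^+ p = 1 by rewrite /zeta exprAC rootCK // sqrrN !expr1n.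
have [k k_prim k_dvd_p] := prim_order_exists p_gt0 zeta_p.
have /orP [/eqP k1 | /eqP kp] := (primeP p_prime).2 k k_dvd_p; last by rewrite kp in k_prim.
move/eqP: (prim_expr_order k_prim).
by rewrite k1 expr1 (negbTE (zeta_neq1 (prime_gt1 p_prime))).
Qed.

Section PrimeField.
Variables (F : finFieldType) (p : nat).
Hypotheses (p_prime : prime p) (pcharF : p \in [pchar F]).

Let p_gt0 := prime_gt0 p_prime.
Let pred_p_gt0 : (0 < p.-1)%N. Proof. by rewrite -subn1 subn_gt0 prime_gt1. Qed.

Let Fp_units : seq F := [seq k%:R | k <- index_iota 1 p].

Let Fp_units_uniq : uniq Fp_units.
Proof.
rewrite map_inj_in_uniq ?iota_uniq // => i j.
rewrite !mem_index_iota => /andP [_ i_lt] /andP [_ j_lt] /eqP.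
by rewrite (natr_eq_modp _ _ pcharF) !modn_small // => /eqP.
Qed.

Let size_Fp_units : size Fp_units = p.-1.
Proof. by rewrite size_map size_iota subn1. Qed.

Let Fp_units_roots : all p.-1.-unity_root Fp_units.
Proof.
apply/allP => x /mapP [k]; rewrite mem_index_iota => /andP [k_gt0 k_lt] ->.
rewrite unity_rootE expf_predn_eq1 //; first by rewrite -(dvdn_pcharf pcharF) gtnNdvd.
by have := pFrobenius_aut_nat pcharF k; rewrite pFrobenius_autE.
Qed.

Lemma sum_Fp_units (V : nmodType) (h : F -> V) :
  \sum_(k < p | (0 < k)%N) h k%:R = \sum_(x | x ^+ p.-1 == 1) h x.
Proof.
rewrite -(sum_unity_root_seq pred_p_gt0 Fp_units_uniq size_Fp_units Fp_units_roots).
by rewrite big_map big_geq_mkord.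
Qed.

Lemma card_Fp_units : #|[pred x : F | x ^+ p.-1 == 1]| = p.-1.
Proof. exact: card_unity_root_seq pred_p_gt0 Fp_units_uniq size_Fp_units Fp_units_roots. Qed.

Lemma frobenius_fixed_natr (y : F) : y ^+ p = y -> exists2 k, (k < p)%N & y = k%:R.
Proof.
move=> yp; have [-> | y_neq0] := eqVneq y 0; first by exists 0%N.
have /eqP := expf_predn_eq1 p_gt0 y_neq0 yp.
rewrite (unity_root_seqE pred_p_gt0 Fp_units_uniq size_Fp_units Fp_units_roots).
by case/mapP => k; rewrite mem_index_iota => /andP [_ k_lt] ->; exists k.
Qed.

Section Trace.
Variable m : nat.
Hypotheses (m_gt0 : (0 < m)%N) (card_F : #|F| = (p ^ m)%N).

Lemma trFD (x y : F) : trF p m (x + y) = trF p m x + trF p m y.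
Proof.
rewrite /trF -big_split; apply: eq_bigr => j _; apply: exprDn_pchar.
by rewrite pnatX (pnatE _ p_prime) pcharF.
Qed.

Lemma trF0 : trF p m (0 : F) = 0.
Proof. by rewrite /trF big1 // => j _; rewrite expr0n expn_eq0 eqn0Ngt p_gt0. Qed.

Lemma trF_frobenius (x : F) : trF p m x ^+ p = trF p m x.
Proof.
rewrite /trF -pFrobenius_autE (rmorph_sum (pFrobenius_aut pcharF)) /=.
under eq_bigr do rewrite pFrobenius_autE -exprM -expnSr.
move: m_gt0 card_F; case: m => [//|n] _ card_Fn.
by rewrite big_ord_recr big_ord_recl /= -card_Fn expf_card addrC.
Qed.

Lemma tr_natE (x : F) : (tr_nat p m x)%:R = trF p m x.
Proof.
rewrite /tr_nat; case: pickP => [k /eqP -> // | no_k] /=.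
have [k k_lt tr_k] := frobenius_fixed_natr (trF_frobenius x).
by have := no_k (Ordinal k_lt); rewrite /= tr_k eqxx.
Qed.

Lemma exists_trF_neq0 : exists y : F, trF p m y != 0.
Proof.
have p_gt1 := prime_gt1 p_prime.
pose P : {poly F} := \sum_(j < m) 'X^(p ^ j).
have P_eval x : P.[x] = trF p m x.
  by rewrite horner_sum; apply: eq_bigr => j _; rewrite hornerXn.
have P_lead : P`_(p ^ m.-1) = 1.
  have m1_lt : (m.-1 < m)%N by rewrite ltn_predL.
  rewrite coef_sum (bigD1 (Ordinal m1_lt)) //= coefXn eqxx big1 ?addr0 // => j.
  by rewrite -val_eqE /= => j_neq; rewrite coefXn eqn_exp2l // eq_sym (negbTE j_neq).
have P_neq0 : P != 0 by apply: contra_eq_neq P_lead => ->; rewrite coef0 eq_sym oner_neq0.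
have size_P : (size P <= (p ^ m.-1).+1)%N.
  apply: leq_trans (size_sum _ _ _) _; apply/bigmax_leqP => j _.
  by rewrite size_polyXn ltnS leq_exp2l // -ltnS prednK.
suff /allPn [y _ Py] : ~~ all (root P) (enum F) by exists y; rewrite -P_eval.
apply/negP => /(max_poly_roots P_neq0)/(_ (enum_uniq _)).
rewrite -cardE card_F -(prednK m_gt0) expnS => /leq_trans/(_ size_P).
by rewrite ltnS leqNgt ltn_Pmull // expn_gt0 p_gt0.
Qed.

Lemma psi_eq1 (x : F) : (psi p m x == 1) = (trF p m x == 0).
Proof. by rewrite /psi -(prim_order_dvd (zeta_prim p_prime)) (dvdn_pcharf pcharF) tr_natE. Qed.

Lemma psiD (x y : F) : psi p m (x + y) = psi p m x * psi p m y.
Proof.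
apply/eqP; rewrite /psi -exprD (eq_prim_root_expr (zeta_prim p_prime)).
by rewrite -(natr_eq_modp _ _ pcharF) natrD !tr_natE trFD.
Qed.

Lemma sum_psi : \sum_(x : F) psi p m x = 0.
Proof.
have [y tr_y_neq0] := exists_trF_neq0.
have : \sum_(x : F) psi p m x = psi p m y * \sum_(x : F) psi p m x.
  rewrite mulr_sumr [LHS](reindex_inj (addIr y)) /=.
  by apply: eq_bigr => x _; rewrite psiD mulrC.
move/eqP; rewrite -subr_eq0 -{1}[\sum_x _]mul1r -mulrBl mulf_eq0 subr_eq0 eq_sym.
by rewrite psi_eq1 (negbTE tr_y_neq0) => /eqP.
Qed.

Lemma sum_psi_units : \sum_(x : F | x != 0) psi p m x = -1.
Proof.
have psi0 : psi p m (0 : F) = 1 by apply/eqP; rewrite psi_eq1 trF0.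
by have := sum_psi; rewrite (bigD1 0) //= psi0 addrC => /eqP; rewrite addr_eq0 => /eqP.
Qed.

End Trace.
End PrimeField.

Lemma qchar1 (F : finFieldType) : qchar (1 : F) = 1.
Proof.
have one_sqr : [exists y : F, y ^+ 2 == 1] by apply/existsP; exists 1; rewrite expr1n.
by rewrite /qchar oner_eq0 one_sqr.
Qed.

Section QuadraticCharacter.
Variable F : finFieldType.
Hypothesis odd_card : odd #|F|.

Let units_gt0 : (0 < #|F|.-1)%N.
Proof. by rewrite -subn1 subn_gt0 finNzRing_gt1. Qed.

Let unit_expr_card (x : F) : x != 0 -> x ^+ #|F|.-1 = 1.
Proof. by move=> x_neq0; rewrite expf_predn_eq1 ?expf_card // (leq_trans _ (finNzRing_gt1 F)). Qed.

Let exists_generator : exists g : F, #|F|.-1.-primitive_root g.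
Proof.
have /hasP [g _ g_prim] : has #|F|.-1.-primitive_root (enum [pred x : F | x != 0]).
  apply: cyclic.has_prim_root; rewrite ?enum_uniq // -?cardE ?cardC1 //.
  by apply/allP => x; rewrite mem_enum unity_rootE => /unit_expr_card ->.
by exists g.
Qed.

Let qchar_gen_expr (g : F) k : #|F|.-1.-primitive_root g -> qchar (g ^+ k) = (-1) ^+ k.
Proof.
move=> g_prim; have g_neq0 : g != 0 by rewrite (prim_root_eq0 g_prim) -lt0n.
rewrite /qchar expf_eq0 (negbTE g_neq0) andbF -signr_odd.
have [k_odd | k_even] := boolP (odd k); last first.
  have -> // : [exists y, y ^+ 2 == g ^+ k].
  by apply/existsP; exists (g ^+ k./2); rewrite -exprM muln2 even_halfK.
suff /negbTE -> : ~~ [exists y, y ^+ 2 == g ^+ k] by [].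
apply/existsPn => y; apply/eqP => y2.
have y_neq0 : y != 0.
  by apply/eqP => y0; move/eqP: y2; rewrite y0 expr0n eq_sym expf_eq0 (negbTE g_neq0) andbF.
have [j y_eq] := prim_rootP g_prim (unit_expr_card y_neq0).
have units_even : odd #|F|.-1 = false.
  by apply/negbTE; rewrite -oddS prednK // (ltnW (finNzRing_gt1 F)).
move/eqP: y2; rewrite y_eq -exprM (eq_prim_root_expr g_prim) => /eqP/(congr1 odd).
by rewrite !odd_mod // oddM andbF k_odd.
Qed.

Lemma qcharM (x y : F) : qchar (x * y) = qchar x * qchar y.
Proof.
have [-> | x_neq0] := eqVneq x 0; first by rewrite mul0r /qchar eqxx mul0r.
have [-> | y_neq0] := eqVneq y 0; first by rewrite mulr0 /qchar eqxx mulr0.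
have [g g_prim] := exists_generator.
have [i ->] := prim_rootP g_prim (unit_expr_card x_neq0).
have [j ->] := prim_rootP g_prim (unit_expr_card y_neq0).
by rewrite -exprD !qchar_gen_expr // exprD.
Qed.

Lemma qchar_sqr (x : F) : x != 0 -> qchar x ^+ 2 = 1.
Proof. by move=> x_neq0; rewrite /qchar (negbTE x_neq0); case: ifP; rewrite ?sqrrN expr1n. Qed.

Lemma qcharV (x : F) : qchar x^-1 = qchar x.
Proof.
have [-> | x_neq0] := eqVneq x 0; first by rewrite invr0.
rewrite -[LHS]mulr1 -(qchar_sqr x_neq0) expr2 mulrA -qcharM mulVf // qchar1.
exact: mul1r.
Qed.

End QuadraticCharacter.

Lemma gcdn_pred_divn n e k : (0 < k)%N -> (k %| n)%N -> (n %| e)%N ->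
  coprime k (e %/ n) -> gcdn n (e %/ k) = (n %/ k)%N.
Proof.
move=> k_gt0 k_dvd_n n_dvd_e k_co.
have -> : (e %/ k = n %/ k * (e %/ n))%N.
  by rewrite -{1}(divnK n_dvd_e) -{2}(divnK k_dvd_n) mulnA mulnK // mulnC.
by rewrite -{1}(divnK k_dvd_n) -muln_gcdr (eqP k_co) muln1.
Qed.

Section Corollary.
Variables (F : finFieldType) (p m N : nat) (theta : F).
Hypotheses (p_prime : prime p) (p_odd : odd p) (m_gt0 : (0 < m)%N).
Hypotheses (pcharF : p \in [pchar F]) (card_F : #|F| = (p ^ m)%N).
Hypotheses (N_gt0 : (0 < N)%N) (N_dvd : (N %| p.-1)%N).
Hypothesis N_coprime : coprime N ((p ^ m).-1 %/ p.-1).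
Hypothesis theta_prim : ((p ^ m).-1 %/ N).-primitive_root theta.

Local Notation b := ((p ^ m).-1 %/ N)%N.

Let gcd_orders : gcdn p.-1 b = (p.-1 %/ N)%N.
Proof. exact: gcdn_pred_divn N_gt0 N_dvd (dvdn_pred_predX p m) N_coprime. Qed.

Let mul_orders : (p.-1 * b = gcdn p.-1 b * #|F|.-1)%N.
Proof.
have N_dvd_q1 := dvdn_trans N_dvd (dvdn_pred_predX p m).
by rewrite gcd_orders card_F (muln_divCA N_dvd N_dvd_q1) mulnC.
Qed.

Lemma sum_Fp_theta_powers (V : nmodType) (c : F) (h : F -> V) : c != 0 ->
  \sum_(k < p | (0 < k)%N) \sum_(i < b) h (k%:R * c * theta ^+ i)
    = (\sum_(z | z != 0) h z) *+ (p.-1 %/ N).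
Proof.
move=> c_neq0; rewrite -(sum_units_scale h c_neq0) -gcd_orders.
rewrite -(sum_mul_unity_roots (card_Fp_units p_prime pcharF)
  (card_prim_root_powers theta_prim) mul_orders).
rewrite (sum_Fp_units p_prime pcharF (fun x => \sum_(i < b) h (x * c * theta ^+ i))).
apply: eq_bigr => x _; rewrite (sum_prim_root_powers theta_prim (fun y => h (x * c * y))).
by apply: eq_bigr => y _; rewrite mulrAC mulrC.
Qed.

Lemma sum_psi_Fp_theta_powers (c : F) : c != 0 ->
  \sum_(k < p | (0 < k)%N) \sum_(i < b) psi p m ((k%:R : F) * c * theta ^+ i)
    = - ((p.-1 %/ N)%:R : algC).
Proof.
move=> c_neq0; rewrite (sum_Fp_theta_powers (psi p m) c_neq0).
by rewrite (sum_psi_units p_prime pcharF m_gt0 card_F) mulNrn.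
Qed.

Lemma sum_psi_qchar_Fp_theta_powers (a c : F) : c != 0 ->
  \sum_(k < p | (0 < k)%N) \sum_(i < b)
      psi p m ((k%:R : F) * c * theta ^+ i) * qchar ((k%:R : F) * a * theta ^+ i)
    = (p.-1 %/ N)%:R * qchar (a * c) * \sum_(x : F | x != 0) psi p m x * qchar x.
Proof.
move=> c_neq0; have odd_F : odd #|F| by rewrite card_F oddX p_odd orbT.
transitivity (\sum_(k < p | (0 < k)%N) \sum_(i < b)
    (fun z => psi p m z * qchar (a / c * z)) ((k%:R : F) * c * theta ^+ i)).
  apply: eq_bigr => k _; apply: eq_bigr => i _ /=; congr (_ * qchar _).
  by rewrite [k%:R * c]mulrC -!mulrA mulKf // mulrCA.
rewrite (sum_Fp_theta_powers (fun z => psi p m z * qchar (a / c * z)) c_neq0)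
  -mulrA mulr_natl.
congr (_ *+ _); rewrite mulr_sumr; apply: eq_bigr => z _.
by rewrite !(qcharM odd_F) (qcharV odd_F) mulrCA.
Qed.

End Corollary.

Theorem corollary3 (F : finFieldType) (p m N : nat) (theta c : F) :
  prime p -> odd p -> (0 < m)%N -> p \in [pchar F] -> #|F| = (p ^ m)%N ->
  (0 < N)%N -> (N %| p.-1)%N -> coprime N ((p ^ m).-1 %/ p.-1) ->
  (((p ^ m).-1 %/ N).-primitive_root theta) -> c != 0 ->
  (\sum_(k < p | (0 < k)%N) \sum_(i < (p ^ m).-1 %/ N)
      psi p m ((k%:R : F) * c * theta ^+ i)
     = - ((p.-1 %/ N)%:R : algC))
  /\
  (forall a : F,
    \sum_(k < p | (0 < k)%N) \sum_(i < (p ^ m).-1 %/ N)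
      psi p m ((k%:R : F) * c * theta ^+ i) * qchar ((k%:R : F) * a * theta ^+ i)
    = (p.-1 %/ N)%:R * qchar (a * c) *
        \sum_(x : F | x != 0) psi p m x * qchar x).
Proof.
move=> p_prime p_odd m_gt0 pcharF card_F N_gt0 N_dvd N_coprime theta_prim c_neq0.
split=> [|a]; first exact: sum_psi_Fp_theta_powers.
exact: sum_psi_qchar_Fp_theta_powers.
Qed.
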